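(* Assume the reward is bounded, $r(y,x_0)\in[-D,D]$, and let $\lambda>0$, $M\ge1$, $1\le I\le T$, $\epsilon>0$. Suppose that the energy estimates $\widehat{\mathcal E}(y,x_s)$ used in Algorithm 1 satisfy $|\mathcal E(y,x_s)-\widehat{\mathcal E}(y,x_s)|\le\epsilon$ for every query $y$ and every intermediate state $x_s$, and that $C-\epsilon-h(\epsilon,M,\lambda,D)>0$, where $$h(\epsilon,M,\lambda,D)=\frac{e^{D/\lambda}-e^{-D/\lambda}}{2}\sqrt{\frac{2}{M}\log\!\left(\frac{2}{\epsilon}\right)}.$$ Let $q(x_0\mid y)$ be the law of the output of Algorithm 1. Then $$\mathsf{TV}\big(q(x_0\mid y)\,\|\,p(x_0\mid y)\big)\le I\left(\frac{2\epsilon+h(\epsilon,M,\lambda,D)}{C-\epsilon-h(\epsilon,M,\lambda,D)}\right)+I\epsilon=\tilde{\mathcal O}\!\left(\frac{I}{\sqrt M}+I\epsilon\right).$$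
   Context: Setting: MLM framework with vocabulary $\mathcal V$, response length $d_x$, nested mask sets, backward generation $x_T\to\cdots\to x_0$ with $x_T$ the fixed fully masked sequence; $p_{\mathrm{ref}}$ is a reference model giving transitions $p_{\mathrm{ref}}(x_s\mid y,x_t)$ and completions $p_{\mathrm{ref}}(x_0\mid y,x_s)$ for a query $y$. Target distribution: $p(x_0\mid y)=p_{\mathrm{ref}}(x_0\mid y)\exp(r(y,x_0)/\lambda)/C$ with $C=\sum_{x_0}p_{\mathrm{ref}}(x_0\mid y)\exp(r(y,x_0)/\lambda)$. Energy: $\mathcal E(y,x_s)=\mathbb E_{p_{\mathrm{ref}}(x_0\mid y,x_s)}[\exp(r(y,x_0)/\lambda)]$. Algorithm 1 (ETS): given $I$ guidance steps with timesteps $t_i=iT/I$ ($t_0=0$, $t_I=T$), start at $x_{t_I}=x_T$; for $i=I,I-1,\dots,1$: draw $M$ candidates $x_{t_{i-1}}(1),\dots,x_{t_{i-1}}(M)$ i.i.d. from $p_{\mathrm{ref}}(x_{t_{i-1}}\mid y,x_{t_i})$; compute weights $w_m=\widehat{\mathcal E}(y,x_{t_{i-1}}(m))/\sum_{m'=1}^M\widehat{\mathcal E}(y,x_{t_{i-1}}(m'))$; select index $m^*$ with probability $w_{m^*}$ and set $x_{t_{i-1}}=x_{t_{i-1}}(m^* )$. The output is $x_0$. Total variation distance: $\mathsf{TV}(p\|q)=\frac12\sum_x|p(x)-q(x)|$. *)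

From mathcomp Require Import all_boot all_order all_algebra.
From mathcomp Require Import reals sequences exp.
Set Implicit Arguments. Unset Strict Implicit. Unset Printing Implicit Defensive.
Import Order.TTheory GRing.Theory Num.Theory.
Local Open Scope ring_scope.

Section ETS.
Variables (R : realType) (V : finType) (dx : nat) (Y : Type).

(* A (partially) masked response: each position holds a token or the mask (None). *)
Definition state := {ffun 'I_dx -> option V}.

Definition fully_masked : state := [ffun _ => None].

(* Reference model, given by its one-step backward kernels:
   K t y x x' = p_ref(x_{t-1} = x' | y, x_t = x), for 1 <= t <= T. *)
Definition kernel := nat -> Y -> state -> state -> R.

Variable K : kernel.

(* ptrans y s n x x' = p_ref(x_s = x' | y, x_{s+n} = x)  (n-step backward transition). *)
Fixpoint ptrans (y : Y) (s n : nat) (x x' : state) : R :=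
  match n with
  | 0 => (x == x')%:R
  | n'.+1 => \sum_(z : state) K (s + n'.+1) y x z * ptrans y s n' z x'
  end.

Definition pref_trans (y : Y) (t s : nat) (x x' : state) : R := ptrans y s (t - s) x x'.

Definition pref_compl (y : Y) (s : nat) (x x0 : state) : R := ptrans y 0 s x x0.

Definition pref0 (T : nat) (y : Y) (x0 : state) : R := pref_compl y T fully_masked x0.

Variables (r : Y -> state -> R) (lam : R).

Definition energy (y : Y) (s : nat) (x : state) : R :=
  \sum_(x0 : state) pref_compl y s x x0 * expR (r y x0 / lam).

Definition normC (T : nat) (y : Y) : R :=
  \sum_(x0 : state) pref0 T y x0 * expR (r y x0 / lam).

Definition target (T : nat) (y : Y) (x0 : state) : R :=
  pref0 T y x0 * expR (r y x0 / lam) / normC T y.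

Definition tstep (T I i : nat) : nat := (i * T %/ I)%N.

Variable Ehat : Y -> nat -> state -> R.

(* One ETS guidance step from x_t = x to x_s = x' with M candidates:
   draw c(1..M) iid from p_ref(. | y, x_t), pick m with prob. w_m, output c m. *)
Definition ets_step (M : nat) (y : Y) (t s : nat) (x x' : state) : R :=
  \sum_(c : {ffun 'I_M -> state})
     (\prod_(m < M) pref_trans y t s x (c m)) *
     ((\sum_(m < M | c m == x') Ehat y s (c m)) / (\sum_(m < M) Ehat y s (c m))).

(* ets_from T I M y k x x0 = law of the output x_0 of Algorithm 1 when the chain
   is at x_{t_k} = x and guidance steps i = k, ..., 1 remain. *)
Fixpoint ets_from (T I M : nat) (y : Y) (k : nat) (x x0 : state) : R :=
  match k with
  | 0 => (x == x0)%:R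
  | k'.+1 => \sum_(z : state)
               ets_step M y (tstep T I k'.+1) (tstep T I k') x z * ets_from T I M y k' z x0
  end.

Definition ets_law (T I M : nat) (y : Y) (x0 : state) : R :=
  ets_from T I M y I fully_masked x0.

End ETS.

Definition TV (R : realType) (S : finType) (p q : S -> R) : R :=
  2^-1 * \sum_(x : S) `|p x - q x|.

Definition hfun (R : realType) (eps : R) (M : nat) (lam D : R) : R :=
  (expR (D / lam) - expR (- (D / lam))) / 2
  * Num.sqrt (2 / M%:R * ln (2 / eps)).

(* Hybrid argument.  Let hybrid k be the law of the output when the exactly tilted
   chain p is followed down to t_k and Algorithm 1 afterwards, so that hybrid I = q,
   hybrid 0 = p and TV(q, p) is at most the sum of the TV(hybrid (k+1), hybrid k).
   Two consecutive hybrids differ in one guidance step only, where the tilted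
   transition p_ref(x_s | x_t) E(x_s) / E(x_t) is replaced by resampling one of M
   i.i.d. candidates with weights Ehat.  Coupling both laws through the same
   candidates, their distance is at most eps / E(x_t), from the estimates, plus half
   the mean relative deviation of the empirical mean of E over the candidates, which
   a second-moment bound makes at most (e^(D/lam) - e^(-D/lam)) / (2 sqrt M E(x_t));
   this is below h / E(x_t) as soon as eps < 1.  Averaging over the tilted law of x_t
   turns 1 / E(x_t) into 1 / C, so each step costs at most (eps + h) / C; for
   eps >= 1 the trivial bound TV <= 1 suffices. *)

From mathcomp Require Import all_boot all_order all_algebra.
From mathcomp Require Import reals sequences exp ring lra.
Set Implicit Arguments. Unset Strict Implicit. Unset Printing Implicit Defensive.
Import Order.TTheory GRing.Theory Num.Theory.
Local Open Scope ring_scope.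

Section FiniteDistributions.
Variable R : realType.

Lemma eq_TV (S : finType) (p p' q q' : S -> R) : p =1 p' -> q =1 q' -> TV p q = TV p' q'.
Proof. by move=> pp qq; rewrite /TV; congr (_ * _); apply: eq_bigr => x _; rewrite pp qq. Qed.

Lemma TV_le1 (S : finType) (p q : S -> R) :
  (forall x, 0 <= p x) -> (forall x, 0 <= q x) -> \sum_x p x = 1 -> \sum_x q x = 1 ->
  TV p q <= 1.
Proof.
move=> p0 q0 p1 q1; have : \sum_x `|p x - q x| <= \sum_x p x + \sum_x q x.
  rewrite -big_split; apply: ler_sum => x _; apply: le_trans (ler_normB _ _) _.
  by rewrite (ger0_norm (p0 x)) (ger0_norm (q0 x)).
by rewrite /TV p1 q1; lra.
Qed.

Lemma TV_triangle (S : finType) (p q u : S -> R) : TV p u <= TV p q + TV q u.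
Proof.
rewrite /TV -mulrDr -big_split /=; apply: ler_wpM2l; first by rewrite invr_ge0.
apply: ler_sum => x _; have -> : p x - u x = (p x - q x) + (q x - u x) by ring.
exact: ler_normD.
Qed.

Lemma TV_telescope (S : finType) (F : nat -> S -> R) n :
  TV (F n) (F 0%N) <= \sum_(k < n) TV (F k.+1) (F k).
Proof.
elim: n => [|n IH].
  by rewrite big_ord0 /TV big1 ?mulr0 // => x _; rewrite subrr normr0.
rewrite big_ord_recr /= addrC; apply: le_trans (TV_triangle _ (F n) _) _.
by rewrite lerD2l.
Qed.

Lemma TV_mixture_le (X Z W : finType) (a : X -> R) (Q P : X -> Z -> R) (F : Z -> W -> R) :
  (forall x, 0 <= a x) -> (forall z w, 0 <= F z w) -> (forall z, \sum_w F z w = 1) ->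
  TV (fun w => \sum_z (\sum_x a x * Q x z) * F z w)
     (fun w => \sum_z (\sum_x a x * P x z) * F z w)
  <= \sum_x a x * TV (Q x) (P x).
Proof.
move=> a0 F0 F1; rewrite /TV; under [X in _ <= X]eq_bigr do rewrite mulrCA.
rewrite -mulr_sumr; apply: ler_wpM2l; first by rewrite invr_ge0.
pose d z := \sum_x a x * (Q x z - P x z).
have dF w : \sum_z (\sum_x a x * Q x z) * F z w - \sum_z (\sum_x a x * P x z) * F z w
    = \sum_z d z * F z w.
  by rewrite -sumrB; apply: eq_bigr => z _; rewrite -mulrBl -sumrB /d;
     congr (_ * _); apply: eq_bigr => x _; rewrite mulrBr.
apply: (@le_trans _ _ (\sum_z `|d z|)).
  apply: (@le_trans _ _ (\sum_w \sum_z `|d z| * F z w)).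
    apply: ler_sum => w _; rewrite dF; apply: le_trans (ler_norm_sum _ _ _) _.
    by apply: ler_sum => z _; rewrite normrM (ger0_norm (F0 z w)).
  by rewrite exchange_big; apply: ler_sum => z _; rewrite -mulr_sumr F1 mulr1.
apply: (@le_trans _ _ (\sum_z \sum_x a x * `|Q x z - P x z|)).
  apply: ler_sum => z _; apply: le_trans (ler_norm_sum _ _ _) _.
  by apply: ler_sum => x _; rewrite normrM ger0_norm.
by rewrite exchange_big; apply: ler_sum => x _; rewrite mulr_sumr.
Qed.

Lemma expect_abs_sqr_le (S : finType) (p X : S -> R) :
  (forall t, 0 <= p t) -> \sum_t p t = 1 ->
  (\sum_t p t * `|X t|) ^+ 2 <= \sum_t p t * X t ^+ 2.
Proof.
move=> p0 p1; set a := \sum_t p t * `|X t|.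
have : 0 <= \sum_t p t * (`|X t| - a) ^+ 2.
  by apply: sumr_ge0 => t _; apply: mulr_ge0; [exact: p0|exact: sqr_ge0].
have -> : \sum_t p t * (`|X t| - a) ^+ 2 =
    \sum_t p t * X t ^+ 2 - 2 * a * \sum_t p t * `|X t| + a ^+ 2 * \sum_t p t.
  transitivity (\sum_t (p t * X t ^+ 2 - 2 * a * (p t * `|X t|)) + \sum_t a ^+ 2 * p t).
    rewrite -big_split /=; apply: eq_bigr => t _.
    by rewrite -[X t ^+ 2]real_normK ?num_real //; ring.
  by rewrite sumrB -!mulr_sumr.
by rewrite p1 -/a; lra.
Qed.

End FiniteDistributions.

Section IidSample.
Variables (R : realType) (S : finType) (M : nat) (pi : S -> R).
Hypothesis pi_ge0 : forall t, 0 <= pi t.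
Hypothesis pi_sum1 : \sum_t pi t = 1.

Definition iid (c : {ffun 'I_M -> S}) : R := \prod_(m < M) pi (c m).

Lemma iid_ge0 c : 0 <= iid c.
Proof. exact: prodr_ge0. Qed.

Lemma iid_expect_prod (G : 'I_M -> S -> R) :
  \sum_c iid c * \prod_(m < M) G m (c m) = \prod_(m < M) \sum_t pi t * G m t.
Proof. by rewrite bigA_distr_bigA; apply: eq_bigr => c _; rewrite -big_split. Qed.

Lemma iid_sum1 : \sum_c iid c = 1.
Proof. by rewrite -(bigA_distr_bigA (fun (_ : 'I_M) => pi)) big1. Qed.

Lemma iid_expect1 (i : 'I_M) (f : S -> R) :
  \sum_c iid c * f (c i) = \sum_t pi t * f t.
Proof.
pose G m t := if m == i then f t else 1.
have G1 m : m != i -> \sum_t pi t * G m t = 1.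
  by move=> /negbTE mi; rewrite /G mi; under eq_bigr do rewrite mulr1.
have := iid_expect_prod G; rewrite (bigD1 i) //= (big1 _ _ _ G1) mulr1 /G eqxx => <-.
apply: eq_bigr => c _; congr (_ * _).
by rewrite (bigD1 i) //= eqxx big1 ?mulr1 // => m /negbTE ->.
Qed.

Lemma iid_expect2 (i j : 'I_M) (f g : S -> R) : i != j ->
  \sum_c iid c * (f (c i) * g (c j)) = (\sum_t pi t * f t) * (\sum_t pi t * g t).
Proof.
move=> ij; pose G m t := if m == i then f t else if m == j then g t else 1.
have ji : (j == i) = false by rewrite eq_sym (negbTE ij).
have G1 m : (m != i) && (m != j) -> \sum_t pi t * G m t = 1.
  by case/andP=> /negbTE mi /negbTE mj; rewrite /G mi mj; under eq_bigr do rewrite mulr1.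
have := iid_expect_prod G; rewrite (bigD1 i) // (bigD1 j) 1?eq_sym //=.
rewrite (big1 _ _ _ G1) mulr1 /G eqxx ji eqxx => <-; apply: eq_bigr => c _; congr (_ * _).
rewrite (bigD1 i) // (bigD1 j) 1?eq_sym //= eqxx ji eqxx.
by rewrite big1 ?mulr1 // => m /andP[/negbTE -> /negbTE ->].
Qed.

Lemma iid_expect_sqr_sum (g : S -> R) : \sum_t pi t * g t = 0 ->
  \sum_c iid c * (\sum_(m < M) g (c m)) ^+ 2 = M%:R * \sum_t pi t * g t ^+ 2.
Proof.
move=> g0.
have sqr_sum c : iid c * (\sum_(m < M) g (c m)) ^+ 2 =
    \sum_(m < M) \sum_(m' < M) iid c * (g (c m) * g (c m')).
  rewrite expr2 mulr_suml mulr_sumr; apply: eq_bigr => m _.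
  by rewrite mulr_sumr mulr_sumr.
rewrite (eq_bigr _ (fun c _ => sqr_sum c)) exchange_big /=.
transitivity (\sum_(m < M) \sum_t pi t * g t ^+ 2); last by rewrite sumr_const card_ord mulr_natl.
apply: eq_bigr => m _; rewrite exchange_big /= (bigD1 m) //=.
rewrite [X in _ + X]big1 => [|m' m'm]; last by rewrite iid_expect2 1?eq_sym // g0 mul0r.
by rewrite addr0 -(iid_expect1 m); apply: eq_bigr => c _; rewrite expr2.
Qed.

Lemma iid_expect_sum_at (f : S -> R) z :
  \sum_c iid c * \sum_(m < M | c m == z) f (c m) = M%:R * (pi z * f z).
Proof.
transitivity (\sum_(m < M) \sum_c iid c * ((c m == z)%:R * f (c m))).
  rewrite exchange_big; apply: eq_bigr => c _; rewrite big_mkcond mulr_sumr.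
  by apply: eq_bigr => m _; case: eqP; rewrite ?mul1r ?mul0r.
have at_z m : \sum_c iid c * ((c m == z)%:R * f (c m)) = pi z * f z.
  rewrite (iid_expect1 m (fun t => (t == z)%:R * f t)) (bigD1 z) //= eqxx mul1r.
  by rewrite big1 ?addr0 // => t /negbTE ->; rewrite mul0r mulr0.
by rewrite (eq_bigr _ (fun m _ => at_z m)) sumr_const card_ord mulr_natl.
Qed.

(* Centred i.i.d. samples are uncorrelated, so the second moment of their sum is
   [M] times that of one sample; Jensen then bounds the first absolute moment. *)
Lemma iid_expect_abs_sum_le (g : S -> R) (B : R) :
  \sum_t pi t * g t = 0 -> 0 <= B -> (forall t, `|g t| <= B) ->
  \sum_c iid c * `|\sum_(m < M) g (c m)| <= Num.sqrt M%:R * B.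
Proof.
move=> g0 B0 gB; set E := \sum_c _.
have E0 : 0 <= E by apply: sumr_ge0 => c _; rewrite mulr_ge0 ?iid_ge0.
have var_le : \sum_t pi t * g t ^+ 2 <= B ^+ 2.
  rewrite -[X in _ <= X]mul1r -pi_sum1 mulr_suml; apply: ler_sum => t _.
  by rewrite ler_wpM2l // -real_normK ?num_real // ler_sqr ?nnegrE.
have var_E : E ^+ 2 <= M%:R * B ^+ 2.
  apply: le_trans (expect_abs_sqr_le _ iid_ge0 iid_sum1) _.
  by rewrite iid_expect_sqr_sum // ler_wpM2l.
rewrite -(ger0_norm E0) -(ger0_norm B0) -!sqrtr_sqr -sqrtrM ?ler0n //.
exact: ler_wsqrtr.
Qed.

End IidSample.

Section Resample.
Variables (R : realType) (S : finType) (M : nat) (pi e w : S -> R) (eps Lo Hi : R).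
Hypothesis pi_ge0 : forall t, 0 <= pi t.
Hypothesis pi_sum1 : \sum_t pi t = 1.
Hypothesis M_gt0 : (0 < M)%N.
Hypothesis w_gt0 : forall t, 0 < w t.
Hypothesis e_w : forall t, `|e t - w t| <= eps.
Hypothesis Lo_gt0 : 0 < Lo.
Hypothesis e_bounds : forall t, Lo <= e t <= Hi.

Definition tilt_mean : R := \sum_t pi t * e t.

Definition tilted_law (z : S) : R := pi z * e z / tilt_mean.

Definition resample_law (z : S) : R :=
  \sum_(c : {ffun 'I_M -> S}) iid pi c *
    ((\sum_(m < M | c m == z) w (c m)) / \sum_(m < M) w (c m)).

Lemma tilt_mean_bounds : Lo <= tilt_mean <= Hi.
Proof.
rewrite /tilt_mean -[Lo]mul1r -[Hi]mul1r -pi_sum1 !mulr_suml.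
by apply/andP; split; apply: ler_sum => t _; apply: ler_wpM2l => //; case/andP: (e_bounds t).
Qed.

Lemma tilt_mean_gt0 : 0 < tilt_mean.
Proof. by case/andP: tilt_mean_bounds => /(lt_le_trans Lo_gt0). Qed.

Let M_gt0R : 0 < M%:R :> R.
Proof. by rewrite ltr0n. Qed.

Lemma sum_weights_gt0 (c : {ffun 'I_M -> S}) : 0 < \sum_(m < M) w (c m).
Proof.
case: M c M_gt0 => // n c _; rewrite big_ord_recl.
by rewrite ltr_pwDl // sumr_ge0 // => m _; exact: ltW.
Qed.

Lemma sum_by_value (c : {ffun 'I_M -> S}) (F : 'I_M -> R) :
  \sum_z \sum_(m < M | c m == z) F m = \sum_(m < M) F m.
Proof. by rewrite [RHS](partition_big c xpredT). Qed.

Lemma tilted_law_expect z :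
  tilted_law z = \sum_c iid pi c * ((\sum_(m < M | c m == z) e (c m)) / (M%:R * tilt_mean)).
Proof.
under eq_bigr do rewrite mulrA; rewrite -mulr_suml iid_expect_sum_at // /tilted_law.
by have := tilt_mean_gt0; have := M_gt0R => ? ?; field; rewrite ?gt_eqF.
Qed.

(* The resampled and the tilted laws are coupled through the same candidates. *)
Lemma resample_coupling : \sum_z `|resample_law z - tilted_law z| <=
  \sum_c iid pi c * \sum_(m < M)
     `|w (c m) / \sum_(m' < M) w (c m') - e (c m) / (M%:R * tilt_mean)|.
Proof.
pose d (c : {ffun 'I_M -> S}) m :=
  w (c m) / \sum_(m' < M) w (c m') - e (c m) / (M%:R * tilt_mean).
have diff z : resample_law z - tilted_law z = \sum_c iid pi c * \sum_(m < M | c m == z) d c m.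
  rewrite tilted_law_expect /resample_law -sumrB; apply: eq_bigr => c _.
  by rewrite sumrB -!mulr_suml mulrBr.
apply: (@le_trans _ _ (\sum_z \sum_c iid pi c * \sum_(m < M | c m == z) `|d c m|)).
  apply: ler_sum => z _; rewrite diff; apply: le_trans (ler_norm_sum _ _ _) _.
  apply: ler_sum => c _; rewrite normrM ger0_norm ?iid_ge0 //.
  by rewrite ler_wpM2l ?iid_ge0 ?ler_norm_sum.
by rewrite exchange_big; apply: ler_sum => c _; rewrite -mulr_sumr sum_by_value.
Qed.

(* Replacing [w] by [e] costs [eps] in each numerator and at most [M eps] in the
   normaliser, hence [2 eps / tilt_mean] in total. *)
Lemma resample_pointwise (c : {ffun 'I_M -> S}) :
  \sum_(m < M) `|w (c m) / \sum_(m' < M) w (c m') - e (c m) / (M%:R * tilt_mean)|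
  <= `|M%:R * tilt_mean - \sum_(m < M) e (c m)| / (M%:R * tilt_mean) + 2 * eps / tilt_mean.
Proof.
set W := \sum_(m' < M) w (c m'); set K := M%:R * tilt_mean.
have W0 : 0 < W := sum_weights_gt0 c.
have K0 : 0 < K by rewrite mulr_gt0 ?M_gt0R ?tilt_mean_gt0.
have Ki : 0 < K^-1 by rewrite invr_gt0.
have Meps : M%:R * eps / K = eps / tilt_mean.
  by have := M_gt0R; have := tilt_mean_gt0 => ? ?; rewrite /K; field; rewrite ?gt_eqF.
have sum_we : \sum_(m < M) `|w (c m) - e (c m)| <= M%:R * eps.
  apply: (@le_trans _ _ (\sum_(m < M) eps)); last by rewrite sumr_const card_ord mulr_natl.
  by apply: ler_sum => m _; rewrite distrC.
have split_m m : `|w (c m) / W - e (c m) / K| <=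
    w (c m) * `|W^-1 - K^-1| + `|w (c m) - e (c m)| / K.
  have -> : w (c m) / W - e (c m) / K = w (c m) * (W^-1 - K^-1) + (w (c m) - e (c m)) / K.
    by field; rewrite ?gt_eqF.
  apply: le_trans (ler_normD _ _) _.
  by rewrite !normrM (ger0_norm (ltW (w_gt0 _))) (gtr0_norm Ki).
have normaliser : W * `|W^-1 - K^-1| = `|K - W| / K.
  transitivity `|W * (W^-1 - K^-1)|; first by rewrite normrM (gtr0_norm W0).
  transitivity `|(K - W) / K|; last by rewrite normrM (gtr0_norm Ki).
  by apply: congr1; field; rewrite ?gt_eqF.
have KW : `|K - W| <= `|K - \sum_(m < M) e (c m)| + M%:R * eps.
  have -> : K - W = (K - \sum_(m < M) e (c m)) + \sum_(m < M) (e (c m) - w (c m)).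
    by rewrite sumrB /W; ring.
  apply: le_trans (ler_normD _ _) _; rewrite lerD2l.
  apply: le_trans (ler_norm_sum _ _ _) (le_trans _ sum_we).
  by apply: ler_sum => m _; rewrite distrC.
apply: le_trans (ler_sum _ (fun m _ => split_m m)) _.
rewrite big_split /= -mulr_suml -/W normaliser -mulr_suml.
have h1 : `|K - W| / K <= (`|K - \sum_(m < M) e (c m)| + M%:R * eps) / K.
  by rewrite ler_pM2r ?invr_gt0.
have h2 : (\sum_(m < M) `|w (c m) - e (c m)|) / K <= M%:R * eps / K.
  by rewrite ler_pM2r ?invr_gt0.
have := lerD h1 h2; rewrite mulrDl Meps; lra.
Qed.

Lemma resample_L1_le : \sum_z `|resample_law z - tilted_law z| <=
  (\sum_c iid pi c * `|M%:R * tilt_mean - \sum_(m < M) e (c m)|) / (M%:R * tilt_mean)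
  + 2 * eps / tilt_mean.
Proof.
have avg (X : {ffun 'I_M -> S} -> R) r :
    \sum_c iid pi c * (X c + r) = \sum_c iid pi c * X c + r.
  by under eq_bigr do rewrite mulrDr; rewrite big_split /= -mulr_suml iid_sum1 // mul1r.
apply: le_trans resample_coupling _.
rewrite mulr_suml; under [X in _ <= X + _]eq_bigr do rewrite -mulrA; rewrite -avg.
apply: ler_sum => c _; apply: ler_wpM2l; first exact: iid_ge0.
exact: resample_pointwise.
Qed.

Lemma resample_TV_le :
  tilt_mean * TV resample_law tilted_law <= eps + (Hi - Lo) / 2 * (Num.sqrt M%:R / M%:R).
Proof.
set mu := tilt_mean; set K := M%:R * mu.
have mu0 : 0 < mu := tilt_mean_gt0.
have /andP[mu_lo mu_hi] := tilt_mean_bounds.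
pose g t := mu - e t.
have g_mean0 : \sum_t pi t * g t = 0.
  by under eq_bigr do rewrite mulrBr; rewrite sumrB -mulr_suml pi_sum1 mul1r subrr.
have g_bound t : `|g t| <= Hi - Lo.
  by case/andP: (e_bounds t) => ? ?; rewrite /g /mu ler_norml; apply/andP; split; lra.
have dev c : `|K - \sum_(m < M) e (c m)| = `|\sum_(m < M) g (c m)|.
  by rewrite sumrB sumr_const card_ord /K mulr_natl.
have E_le : \sum_c iid pi c * `|K - \sum_(m < M) e (c m)| <= Num.sqrt M%:R * (Hi - Lo).
  under eq_bigr do rewrite dev.
  by apply: iid_expect_abs_sum_le => //; lra.
have -> : eps + (Hi - Lo) / 2 * (Num.sqrt M%:R / M%:R) =
    mu * (2^-1 * (Num.sqrt M%:R * (Hi - Lo) / K + 2 * eps / mu)).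
  by rewrite /K; field; rewrite ?gt_eqF.
rewrite /TV; apply: ler_wpM2l; first exact: ltW.
apply: ler_wpM2l; first by rewrite invr_ge0.
apply: le_trans resample_L1_le _.
by rewrite lerD2r ler_pM2r ?invr_gt0 ?mulr_gt0 ?ltr0n.
Qed.

Lemma resample_law_ge0 z : 0 <= resample_law z.
Proof.
apply: sumr_ge0 => c _; apply: mulr_ge0; first exact: iid_ge0.
apply: divr_ge0; last exact: ltW (sum_weights_gt0 c).
by apply: sumr_ge0 => m _; exact: ltW.
Qed.

Lemma resample_law_sum1 : \sum_z resample_law z = 1.
Proof.
rewrite /resample_law exchange_big /= -(iid_sum1 M pi_sum1); apply: eq_bigr => c _.
by rewrite -mulr_sumr -mulr_suml sum_by_value divff ?mulr1 // gt_eqF ?sum_weights_gt0.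
Qed.

Lemma tilted_law_ge0 z : 0 <= tilted_law z.
Proof.
apply: divr_ge0; last exact: ltW tilt_mean_gt0.
apply: mulr_ge0 => //.
by case/andP: (e_bounds z) => /(lt_le_trans Lo_gt0)/ltW.
Qed.

Lemma tilted_law_sum1 : \sum_z tilted_law z = 1.
Proof. by rewrite -mulr_suml divff // gt_eqF // tilt_mean_gt0. Qed.

End Resample.

Lemma tstep0 T I : tstep T I 0 = 0%N.
Proof. by rewrite /tstep mul0n div0n. Qed.

Lemma tstepI T I : (0 < I)%N -> tstep T I I = T.
Proof. by move=> I0; rewrite /tstep mulKn. Qed.

Lemma leq_tstep T I k k' : (k <= k')%N -> (tstep T I k <= tstep T I k')%N.
Proof. by move=> kk'; rewrite /tstep leq_div2r // leq_mul2r kk' orbT. Qed.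

Section ReferenceChain.
Variables (R : realType) (V : finType) (dx : nat) (Y : Type) (K : kernel R V dx Y).
Variables (T : nat) (y : Y).
Hypothesis K_ge0 : forall t x x', (1 <= t <= T)%N -> 0 <= K t y x x'.
Hypothesis K_sum1 : forall t x, (1 <= t <= T)%N -> \sum_x' K t y x x' = 1.

Lemma ptrans_ge0 s n x x' : (s + n <= T)%N -> 0 <= ptrans K y s n x x'.
Proof.
elim: n x x' => [|n IH] x x' sn_T /=; first by rewrite ler0n.
have t_range : (1 <= s + n.+1 <= T)%N by rewrite sn_T addnS.
apply: sumr_ge0 => z _; apply: mulr_ge0; first exact: K_ge0 t_range.
by apply: IH; apply: leq_trans sn_T; rewrite leq_add2l.
Qed.

Lemma ptrans_sum1 s n x : (s + n <= T)%N -> \sum_x' ptrans K y s n x x' = 1.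
Proof.
elim: n x => [|n IH] x sn_T /=.
  by rewrite (bigD1 x) //= eqxx big1 ?addr0 // => z /negbTE; rewrite eq_sym => ->.
have t_range : (1 <= s + n.+1 <= T)%N by rewrite sn_T addnS.
rewrite exchange_big /= -(K_sum1 x t_range).
apply: eq_bigr => z _; rewrite -mulr_sumr IH ?mulr1 //.
by apply: leq_trans sn_T; rewrite leq_add2l.
Qed.

Lemma ptransD s n m x x' :
  ptrans K y s (n + m)%N x x' = \sum_z ptrans K y (s + m)%N n x z * ptrans K y s m z x'.
Proof.
elim: n x => [|n IH] x; rewrite ?addSn /=.
  rewrite (bigD1 x) //= eqxx mul1r big1 ?addr0 // => z /negbTE.
  by rewrite eq_sym => ->; rewrite mul0r.
(* [ptrans] indexes [K] with the ring addition on [nat]. *)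
have -> : (s + (n + m).+1)%R = ((s + m)%N + n.+1)%R.
  by rewrite /GRing.add /= addnS addnA addnAC addnS.
rewrite (eq_bigr _ (fun z _ => congr1 (GRing.mul _) (IH z))).
under eq_bigr do rewrite mulr_sumr.
rewrite exchange_big /=; apply: eq_bigr => z _.
by rewrite mulr_suml; apply: eq_bigr => x'' _; rewrite mulrA.
Qed.

Variables (r : Y -> state V dx -> R) (lam D : R).
Hypothesis r_bounds : forall x0, - D <= r y x0 <= D.
Hypothesis lam_gt0 : 0 < lam.

Lemma energy_ptrans s t x : (s <= t)%N ->
  energy K r lam y t x = \sum_z ptrans K y s (t - s) x z * energy K r lam y s z.
Proof.
move=> st; rewrite /energy /pref_compl.
under eq_bigr do rewrite -{1}(subnK st) -{1}[s]add0n ptransD mulr_suml.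
rewrite exchange_big; apply: eq_bigr => z _; rewrite mulr_sumr.
by apply: eq_bigr => x0 _; rewrite mulrA.
Qed.

Lemma energy_bounds s x : (s <= T)%N ->
  expR (- (D / lam)) <= energy K r lam y s x <= expR (D / lam).
Proof.
move=> sT; have sum1 := ptrans_sum1 x (_ : 0 + s <= T)%N.
rewrite /energy /pref_compl -[expR (- _)]mul1r -[expR (D / lam)]mul1r -sum1 //.
rewrite !mulr_suml; apply/andP; split; apply: ler_sum => x0 _;
  apply: ler_wpM2l; rewrite ?ptrans_ge0 // ler_expR;
  case/andP: (r_bounds x0) => lo hi.
  by rewrite -mulNr ler_pM2r ?invr_gt0.
by rewrite ler_pM2r ?invr_gt0.
Qed.

End ReferenceChain.

Lemma ln_ge_half (R : realType) (eps : R) : 0 < eps < 1 -> 2^-1 <= ln (2 / eps).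
Proof.
case/andP=> eps0 eps1.
have e_half : expR 2^-1 <= 2 :> R.
  have := expRxMexpNx_1 (2^-1 : R); have := expR_ge1Dx (- 2^-1 : R).
  have := expR_ge0 (2^-1 : R); nra.
rewrite -[X in X <= _](expRK 2^-1) ler_ln ?posrE ?expR_gt0 ?divr_gt0 //.
by apply: le_trans e_half _; rewrite ler_pdivlMr //; lra.
Qed.

Lemma sqrt_div_le (R : realType) (m : nat) (L : R) : (0 < m)%N -> 2^-1 <= L ->
  Num.sqrt m%:R / m%:R <= Num.sqrt (2 / m%:R * L).
Proof.
move=> m0 L_ge; have m0R : 0 < m%:R :> R by rewrite ltr0n.
have two_m : 0 < 2 / m%:R :> R by rewrite divr_gt0.
rewrite -ler_sqr ?nnegrE ?sqrtr_ge0 //; last by rewrite divr_ge0 ?sqrtr_ge0 // ltW.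
rewrite expr_div_n !sqr_sqrtr ?ler0n //; last by rewrite mulr_ge0 ?(ltW two_m) //; lra.
have -> : m%:R / m%:R ^+ 2 = 2 / m%:R * 2^-1 :> R by field; rewrite gt_eqF.
by rewrite ler_pM2l.
Qed.

Section Hybrid.
Variables (R : realType) (V : finType) (dx : nat) (Y : Type) (K : kernel R V dx Y).
Variables (r : Y -> state V dx -> R) (Ehat : Y -> nat -> state V dx -> R).
Variables (T I M : nat) (lam D eps : R) (y : Y).
Hypothesis K_ge0 : forall t x x', (1 <= t <= T)%N -> 0 <= K t y x x'.
Hypothesis K_sum1 : forall t x, (1 <= t <= T)%N -> \sum_x' K t y x x' = 1.
Hypothesis r_bounds : forall x0, - D <= r y x0 <= D.
Hypothesis lam_gt0 : 0 < lam.
Hypothesis M_gt0 : (0 < M)%N.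
Hypothesis I_gt0 : (0 < I)%N.
Hypothesis Ehat_gt0 : forall s x, 0 < Ehat y s x.
Hypothesis Ehat_close : forall s x, (s <= T)%N -> `|energy K r lam y s x - Ehat y s x| <= eps.

Local Notation xT := (fully_masked V dx).
Local Notation tk k := (tstep T I k).
Local Notation E s x := (energy K r lam y s x).
Local Notation C := (normC K r lam T y).
Let Lo := expR (- (D / lam)).
Let Hi := expR (D / lam).

Lemma tstep_leT k : (k <= I)%N -> (tk k <= T)%N.
Proof. by move=> kI; rewrite -{2}(tstepI T I_gt0) leq_tstep. Qed.

Lemma energy_gt0 s x : (s <= T)%N -> 0 < E s x.
Proof.
move=> sT; case/andP: (energy_bounds K_ge0 K_sum1 r_bounds lam_gt0 x sT) => lo _.
exact: lt_le_trans (expR_gt0 _) lo.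
Qed.

Lemma normC_gt0 : 0 < C.
Proof. exact: energy_gt0. Qed.

(* Law of [x_(t_k)] under the target chain (a Doob transform of the reference chain). *)
Definition tilted_marg k x := ptrans K y (tk k) (T - tk k) xT x * E (tk k) x / C.

Definition tilted_kernel k x z :=
  pref_trans K y (tk k.+1) (tk k) x z * E (tk k) z / E (tk k.+1) x.

Definition hybrid k x0 := \sum_x tilted_marg k x * ets_from K Ehat T I M y k x x0.

Lemma ets_stepE t s x :
  ets_step K Ehat M y t s x =1 resample_law M (pref_trans K y t s x) (Ehat y s).
Proof. by []. Qed.

Section Level.
Variable k : nat.
Hypothesis k_lt_I : (k < I)%N.
Let a := tk k.
Let b := tk k.+1.
Let a_le_b : (a <= b)%N := leq_tstep T I (leqnSn k).
Let b_le_T : (b <= T)%N := tstep_leT k_lt_I.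
Let a_le_T : (a <= T)%N := leq_trans a_le_b b_le_T.
Let ab_T : (a + (b - a) <= T)%N. Proof. by rewrite subnKC. Qed.

Lemma level_trans_ge0 x z : 0 <= pref_trans K y b a x z.
Proof. exact: ptrans_ge0 ab_T. Qed.

Lemma level_trans_sum1 x : \sum_z pref_trans K y b a x z = 1.
Proof. exact: ptrans_sum1 ab_T. Qed.

Lemma level_energy_bounds z : Lo <= E a z <= Hi.
Proof. exact: (energy_bounds K_ge0 K_sum1 r_bounds lam_gt0 z a_le_T). Qed.

Lemma tilted_kernelE x :
  tilted_kernel k x =1 tilted_law (pref_trans K y b a x) (fun z => E a z).
Proof. by move=> z; rewrite /tilted_kernel /tilted_law /tilt_mean -energy_ptrans. Qed.

Lemma ets_step_ge0 x z : 0 <= ets_step K Ehat M y b a x z.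
Proof.
by rewrite ets_stepE; exact: resample_law_ge0 (level_trans_ge0 x) M_gt0 (Ehat_gt0 a) z.
Qed.

Lemma ets_step_sum1 x : \sum_z ets_step K Ehat M y b a x z = 1.
Proof.
under eq_bigr do rewrite ets_stepE.
exact: resample_law_sum1 (level_trans_sum1 x) M_gt0 (Ehat_gt0 a).
Qed.

Lemma ets_step_TV_le1 x : TV (ets_step K Ehat M y b a x) (tilted_kernel k x) <= 1.
Proof.
have Lo_gt0 : 0 < Lo := expR_gt0 _.
rewrite (eq_TV (ets_stepE _ _ x) (tilted_kernelE x)).
apply: TV_le1; [exact: ets_step_ge0 | | exact: ets_step_sum1 | ].
  exact: tilted_law_ge0 (level_trans_ge0 x) (level_trans_sum1 x) Lo_gt0 level_energy_bounds.
exact: tilted_law_sum1 (level_trans_ge0 x) (level_trans_sum1 x) Lo_gt0 level_energy_bounds.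
Qed.

Lemma ets_step_TV_le x : E b x * TV (ets_step K Ehat M y b a x) (tilted_kernel k x)
  <= eps + (Hi - Lo) / 2 * (Num.sqrt M%:R / M%:R).
Proof.
rewrite (eq_TV (ets_stepE _ _ x) (tilted_kernelE x)) (energy_ptrans K y r lam x a_le_b).
apply: resample_TV_le; rewrite ?expR_gt0 //.
- exact: level_trans_ge0.
- exact: level_trans_sum1.
- by move=> t; exact: Ehat_close a_le_T.
- exact: level_energy_bounds.
Qed.

End Level.

Lemma ets_from_distr k : (k <= I)%N -> forall x,
  (forall x0, 0 <= ets_from K Ehat T I M y k x x0) /\
  \sum_x0 ets_from K Ehat T I M y k x x0 = 1.
Proof.
elim: k => [|k IH] kI x /=.
  split=> [x0|]; first by rewrite ler0n.
  by rewrite (bigD1 x) //= eqxx big1 ?addr0 // => z /negbTE; rewrite eq_sym => ->.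
have IH_ge0 z x0 := (IH (ltnW kI) z).1 x0.
have IH_sum1 z := (IH (ltnW kI) z).2.
split=> [x0|].
  by apply: sumr_ge0 => z _; rewrite mulr_ge0 ?ets_step_ge0 ?IH_ge0.
rewrite exchange_big /= -(ets_step_sum1 kI x); apply: eq_bigr => z _.
by rewrite -mulr_sumr IH_sum1 mulr1.
Qed.

Lemma tilted_marg_ge0 k x : (k <= I)%N -> 0 <= tilted_marg k x.
Proof.
move=> kI; have kT := tstep_leT kI.
apply: divr_ge0; last exact: ltW normC_gt0.
apply: mulr_ge0; last exact: ltW (energy_gt0 _ kT).
by apply: (ptrans_ge0 K_ge0); rewrite subnKC.
Qed.

Lemma tilted_marg_sum1 k : (k <= I)%N -> \sum_x tilted_marg k x = 1.
Proof.
move=> kI; rewrite -mulr_suml -(energy_ptrans K y r lam xT (tstep_leT kI)).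
by rewrite divff // gt_eqF // normC_gt0.
Qed.

Lemma tilted_marg_step k z : (k < I)%N ->
  tilted_marg k z = \sum_x tilted_marg k.+1 x * tilted_kernel k x z.
Proof.
move=> kI; set a := tk k; set b := tk k.+1.
have ab : (a <= b)%N := leq_tstep T I (leqnSn k).
have bT : (b <= T)%N := tstep_leT kI.
have C0 := normC_gt0.
rewrite /tilted_marg -/a -/b.
have -> : ptrans K y a (T - a) xT z = \sum_x ptrans K y b (T - b) xT x * pref_trans K y b a x z.
  by have := ptransD K y a (T - b) (b - a) xT z; rewrite subnKC // addnBA // subnK.
rewrite !mulr_suml; apply: eq_bigr => x _; rewrite /tilted_kernel -/a -/b.
by have := energy_gt0 x bT; move=> ?; field; rewrite ?gt_eqF.
Qed.

Lemma hybrid_TV_step k : (k < I)%N ->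
  TV (hybrid k.+1) (hybrid k) <=
  \sum_x tilted_marg k.+1 x * TV (ets_step K Ehat M y (tk k.+1) (tk k) x) (tilted_kernel k x).
Proof.
move=> kI; pose F := ets_from K Ehat T I M y k.
have [F_ge0 F_sum1] : (forall z x0, 0 <= F z x0) /\ (forall z, \sum_x0 F z x0 = 1).
  by split=> z; have [] := ets_from_distr (ltnW kI) z.
rewrite (@eq_TV _ _ _ (fun x0 => \sum_z (\sum_x tilted_marg k.+1 x *
      ets_step K Ehat M y (tk k.+1) (tk k) x z) * F z x0) _
    (fun x0 => \sum_z (\sum_x tilted_marg k.+1 x * tilted_kernel k x z) * F z x0)).
- by apply: TV_mixture_le => // x; exact: tilted_marg_ge0.
- move=> x0; rewrite /hybrid /=; under eq_bigr do rewrite mulr_sumr.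
  rewrite exchange_big; apply: eq_bigr => z _; rewrite mulr_suml.
  by apply: eq_bigr => x _; rewrite mulrA.
- by move=> x0; apply: eq_bigr => z _; rewrite -tilted_marg_step.
Qed.

Lemma hybrid_TV_step_le1 k : (k < I)%N -> TV (hybrid k.+1) (hybrid k) <= 1.
Proof.
move=> kI; apply: le_trans (hybrid_TV_step kI) _.
rewrite -(tilted_marg_sum1 kI); apply: ler_sum => x _.
by rewrite ler_piMr ?tilted_marg_ge0 ?ets_step_TV_le1.
Qed.

Lemma hybrid_TV_step_le k : (k < I)%N ->
  TV (hybrid k.+1) (hybrid k) <= (eps + (Hi - Lo) / 2 * (Num.sqrt M%:R / M%:R)) / C.
Proof.
move=> kI; have bT := tstep_leT kI; have C0 := normC_gt0.
apply: le_trans (hybrid_TV_step kI) _.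
set bnd := _ / C; set p := ptrans K y (tk k.+1) (T - tk k.+1) xT.
apply: (@le_trans _ _ (\sum_x p x * bnd)); last first.
  by rewrite -mulr_suml (ptrans_sum1 K_sum1) ?mul1r // subnKC.
apply: ler_sum => x _; set tv := TV _ _.
have -> : tilted_marg k.+1 x * tv = p x * (E (tk k.+1) x * tv / C).
  by rewrite /tilted_marg /p; field; rewrite gt_eqF.
apply: ler_wpM2l; first by apply: (ptrans_ge0 K_ge0); rewrite subnKC.
by rewrite ler_pM2r ?invr_gt0 //; exact: ets_step_TV_le kI x.
Qed.

Lemma hybrid_I : hybrid I =1 ets_law K Ehat T I M y.
Proof.
move=> x0; rewrite /hybrid /tilted_marg tstepI // subnn (bigD1 xT) //= eqxx mul1r.
rewrite big1 ?addr0 => [|x /negbTE]; last by rewrite eq_sym => ->; rewrite !mul0r.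
by rewrite divff ?mul1r // gt_eqF // normC_gt0.
Qed.

Lemma hybrid_0 : hybrid 0 =1 target K r lam T y.
Proof.
move=> x0; rewrite /hybrid (bigD1 x0) //= eqxx mulr1.
rewrite big1 ?addr0 => [|x /negbTE ->]; last by rewrite mulr0.
rewrite /tilted_marg tstep0 subn0 /target /energy /pref_compl /=.
rewrite (bigD1 x0) //= eqxx mul1r big1 ?addr0 // => z /negbTE.
by rewrite eq_sym => ->; rewrite mul0r.
Qed.

Lemma hybrid_TV_step_le_bound k : (k < I)%N -> 0 < eps ->
  0 < C - eps - hfun eps M lam D ->
  TV (hybrid k.+1) (hybrid k) <=
    (2 * eps + hfun eps M lam D) / (C - eps - hfun eps M lam D) + eps.
Proof.
move=> kI eps0; set h := hfun eps M lam D => gap.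
have D0 : 0 <= D by case/andP: (r_bounds xT); lra.
have spread_ge0 : 0 <= Hi - Lo.
  have : 0 <= D / lam by rewrite divr_ge0 // ltW.
  by rewrite subr_ge0 ler_expR; lra.
have h0 : 0 <= h by rewrite mulr_ge0 ?sqrtr_ge0 ?divr_ge0.
have C0 := normC_gt0.
have frac_ge0 : 0 <= (2 * eps + h) / (C - eps - h) by rewrite divr_ge0 //; lra.
case: (leP 1 eps) => [eps_ge1 | eps_lt1].
  by apply: le_trans (hybrid_TV_step_le1 kI) _; lra.
apply: le_trans (hybrid_TV_step_le kI) _.
have sample_err : (Hi - Lo) / 2 * (Num.sqrt M%:R / M%:R) <= h.
  by rewrite ler_wpM2l ?divr_ge0 // sqrt_div_le // ln_ge_half // eps0.
have to_h : (eps + (Hi - Lo) / 2 * (Num.sqrt M%:R / M%:R)) / C <= (eps + h) / C.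
  by rewrite ler_pM2r ?invr_gt0 // lerD2l.
have to_gap : (eps + h) / C <= (eps + h) / (C - eps - h).
  by apply: ler_wpM2l; [lra | rewrite lef_pV2 ?posrE //; lra].
have to_2eps : (eps + h) / (C - eps - h) <= (2 * eps + h) / (C - eps - h).
  by apply: ler_wpM2r; [rewrite invr_ge0; lra | lra].
lra.
Qed.
End Hybrid.

Theorem proposition3 (R : realType) (V : finType) (dx : nat) (Y : Type)
  (K : kernel R V dx Y) (r : Y -> state V dx -> R) (Ehat : Y -> nat -> state V dx -> R)
  (T I M : nat) (lam D eps : R) (y : Y) :
  (* reference model: for 1 <= t <= T, K t y' x is a probability distribution on states *)
  (forall t y' x x', (1 <= t <= T)%N -> 0 <= K t y' x x') ->
  (forall t y' x, (1 <= t <= T)%N -> \sum_(x' : state V dx) K t y' x x' = 1) ->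
  (* nested mask sets: a backward step never changes an already unmasked position *)
  (forall t y' x x' (i : 'I_dx), (1 <= t <= T)%N -> K t y' x x' != 0 ->
     x i != None -> x' i = x i) ->
  (* bounded reward *)
  (forall y' x0, - D <= r y' x0 <= D) ->
  0 < lam -> (1 <= M)%N -> (1 <= I <= T)%N -> 0 < eps ->
  (* energy estimates are positive (so the selection weights are probabilities) *)
  (forall y' s x, 0 < Ehat y' s x) ->
  (* eps-accurate energy estimates, for every query and every intermediate state *)
  (forall y' s x, (s <= T)%N -> `|energy K r lam y' s x - Ehat y' s x| <= eps) ->
  normC K r lam T y - eps - hfun eps M lam D > 0 ->
  TV (ets_law K Ehat T I M y) (target K r lam T y)
    <= I%:R * ((2 * eps + hfun eps M lam D) / (normC K r lam T y - eps - hfun eps M lam D))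
       + I%:R * eps.
Proof.
move=> K_ge0 K_sum1 _ r_bounds lam_gt0 M_gt0 /andP[I_gt0 _] eps_gt0 Ehat_gt0 Ehat_close gap.
have K_ge0y t := K_ge0 t y; have K_sum1y t := K_sum1 t y.
have r_bounds_y := r_bounds y; have Ehat_gt0_y := Ehat_gt0 y.
rewrite -(eq_TV (hybrid_I Ehat M K_ge0y K_sum1y r_bounds_y lam_gt0 I_gt0)
                (hybrid_0 K r Ehat T I M lam y)).
apply: le_trans (TV_telescope _ I) _.
rewrite -mulrDr; set bound := _ + eps.
have -> : I%:R * bound = \sum_(k < I) bound by rewrite sumr_const card_ord mulr_natl.
apply: ler_sum => k _.
exact: (hybrid_TV_step_le_bound K_ge0y K_sum1y r_bounds_y lam_gt0 M_gt0 I_gt0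
         Ehat_gt0_y (Ehat_close y) (ltn_ord k) eps_gt0 gap).
Qed.
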